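(* In the whitened Gaussian spiked model (context), condition on the event $\mathcal{E}$. Let $(i_0,j_0)=\arg\max_{i,j}|(\widehat{\boldsymbol{\Sigma}}_{xy})_{ij}|$. There is a constant $C>0$ such that for any $\gamma\in(0,1)$, if $$m\ge\frac{C(1+\rho)^2}{\rho^2(1-\sqrt{\gamma})^2}\,s_{\mathbf{u}}(1)s_{\mathbf{v}}(1)\log n,$$ then $|u_{i_0}|\,|v_{j_0}|\ge\sqrt{\gamma/(s_{\mathbf{u}}(1)s_{\mathbf{v}}(1))}$.
   Context: Model: $m$ i.i.d. samples $(\mathbf{x}_i,\mathbf{y}_i)$ from a zero-mean jointly Gaussian law on $\mathbb{R}^n\times\mathbb{R}^n$ with $\boldsymbol{\Sigma}_{xx}=\boldsymbol{\Sigma}_{yy}=\mathbf{I}_n$, $\boldsymbol{\Sigma}_{xy}=\rho\mathbf{u}\mathbf{v}^\top$, $\rho\in(0,1)$, $\|\mathbf{u}\|_2=\|\mathbf{v}\|_2=1$, $\|\mathbf{u}\|_0\le k_{\mathbf{u}}$, $\|\mathbf{v}\|_0\le k_{\mathbf{v}}$. $\widehat{\boldsymbol{\Sigma}}_{xy}=\frac1m\sum_i\mathbf{x}_i\mathbf{y}_i^\top$, $\mathbf{W}=\widehat{\boldsymbol{\Sigma}}_{xy}-\rho\mathbf{u}\mathbf{v}^\top$. Event $\mathcal{E}$: for all $S_1,S_2\subset[n]$ with $|S_1|\le k_{\mathbf{u}}$, $|S_2|\le k_{\mathbf{v}}$, $\|\mathbf{W}_{S_1,S_2}\|_2\le C'\sqrt{((|S_1|+|S_2|)\log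 n+c'\log n)/m}$ for fixed constants $C',c'>0$ (submatrix, spectral norm). Structure functions: $s_{\mathbf{u}}(p)=(\sum_{i=1}^pu_{(i)}^2)^{-1}$, $s_{\mathbf{v}}(q)=(\sum_{j=1}^qv_{(j)}^2)^{-1}$, where $u_{(i)}$ is the $i$-th largest entry of $\mathbf{u}$ in absolute value; thus $s_{\mathbf{u}}(1)=1/u_{(1)}^2$. *)

From HB Require Import structures.
From mathcomp Require Import all_boot all_order all_algebra.
From mathcomp Require Import reals exp.
Set Implicit Arguments. Unset Strict Implicit. Unset Printing Implicit Defensive.
Import Order.TTheory GRing.Theory Num.Theory.
Local Open Scope ring_scope.

Definition vnorm (R : realType) (n : nat) (x : 'cV[R]_n) : R :=
  Num.sqrt (\sum_(i < n) x i 0 ^+ 2).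

(* Support of a vector (indices of nonzero entries); ||x||_0 = #|vsupp x| *)
Definition vsupp (R : realType) (n : nat) (x : 'cV[R]_n) : {set 'I_n} :=
  [set i | x i 0 != 0].

Definition submx (R : realType) (n : nat) (S1 S2 : {set 'I_n}) (W : 'M[R]_n)
  : 'M[R]_(#|S1|, #|S2|) :=
  mxsub (fun i : 'I_#|S1| => enum_val i) (fun j : 'I_#|S2| => enum_val j) W.

Definition specnorm_le (R : realType) (p q : nat) (A : 'M[R]_(p, q)) (t : R) : Prop :=
  forall z : 'cV[R]_q, vnorm (A *m z) <= t * vnorm z.

Definition Sigmahat (R : realType) (n m : nat) (x y : 'I_m -> 'cV[R]_n) : 'M[R]_n :=
  (m%:R)^-1 *: \sum_(i < m) (x i *m (y i)^T).

Definition eventE (R : realType) (n m ku kv : nat) (C' c' : R) (W : 'M[R]_n) : Prop :=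
  forall S1 S2 : {set 'I_n}, (#|S1| <= ku)%N -> (#|S2| <= kv)%N ->
    specnorm_le (submx S1 S2 W)
      (C' * Num.sqrt (((#|S1| + #|S2|)%:R * ln n%:R + c' * ln n%:R) / m%:R)).

Definition umax (R : realType) (n : nat) (u : 'cV[R]_n) : R :=
  \big[Num.max/0]_(i < n) `|u i 0|.

Definition s1 (R : realType) (n : nat) (u : 'cV[R]_n) : R := (umax u ^+ 2)^-1.

(* Write S = rho u v^T + W.  On the event E, applied to singleton index sets,
   every entry of W is at most eps := C' sqrt((2 + c') log n / m).  If
   (i1, j1) carries the largest entries a = |u_(1)|, b = |v_(1)|, then
     rho a b - eps <= |S i1 j1| <= |S i0 j0| <= rho |u i0| |v j0| + eps,
   so rho |u i0| |v j0| >= rho a b - 2 eps, and the sample-size condition is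
   exactly what makes 2 eps <= rho a b (1 - sqrt gamma). *)

From Pilot Require Import Defs.
From HB Require Import structures.
From mathcomp Require Import all_boot all_order all_algebra.
From mathcomp Require Import reals exp.
From mathcomp Require Import ring lra.
Set Implicit Arguments. Unset Strict Implicit. Unset Printing Implicit Defensive.
Import Order.TTheory GRing.Theory Num.Theory.
Local Open Scope ring_scope.

Section Entrywise.
Variable R : realType.

Lemma vnorm_ge_entry n (x : 'cV[R]_n) i : `|x i 0| <= vnorm x.
Proof.
rewrite /vnorm -sqrtr_sqr ler_sqrt ?sumr_ge0 // => [|k _]; last exact: sqr_ge0.
by rewrite (bigD1 i) //= lerDl sumr_ge0 // => k _; rewrite sqr_ge0.
Qed.

Lemma vnorm_delta n (j : 'I_n) : vnorm (delta_mx j 0 : 'cV[R]_n) = 1.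
Proof.
rewrite /vnorm (bigD1 j) //= big1 => [|k /negbTE nkj]; last by rewrite mxE nkj expr0n.
by rewrite mxE !eqxx expr1n addr0 sqrtr1.
Qed.

Lemma specnorm_le_entry p q (A : 'M[R]_(p, q)) t i j :
  specnorm_le A t -> `|A i j| <= t.
Proof.
move=> /(_ (delta_mx j 0)); rewrite vnorm_delta mulr1; apply: le_trans.
have -> : A i j = col j A i 0 by rewrite mxE.
by rewrite colE vnorm_ge_entry.
Qed.

(* Qualified because mxalgebra's [submx] (row-space inclusion) shadows it. *)
Lemma submx_set1 n (W : 'M[R]_n) i j k l :
  Defs.submx [set i] [set j] W k l = W i j.
Proof.
rewrite mxE; have := enum_valP k; have := enum_valP l.
by rewrite !inE => /eqP -> /eqP ->.
Qed.

Definition entry_noise (C' c' : R) (n m : nat) : R :=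
  C' * Num.sqrt ((2 * ln n%:R + c' * ln n%:R) / m%:R).

Lemma eventE_entry n m ku kv C' c' (W : 'M[R]_n) i j :
  (0 < ku)%N -> (0 < kv)%N -> eventE m ku kv C' c' W ->
  `|W i j| <= entry_noise C' c' n m.
Proof.
move=> ku_gt0 kv_gt0 E.
have Si : (#|[set i]| <= ku)%N by rewrite cards1.
have Sj : (#|[set j]| <= kv)%N by rewrite cards1.
have := specnorm_le_entry (enum_rank_in (set11 i) i) (enum_rank_in (set11 j) j)
  (E _ _ Si Sj).
by rewrite submx_set1 !cards1.
Qed.

End Entrywise.

Section LargestEntry.
Variables (R : realType) (n : nat) (u : 'cV[R]_n).

Lemma umax_ge0 : 0 <= umax u.
Proof. exact: bigmax_ge_id. Qed.

Lemma umax_attained (i0 : 'I_n) : exists i, umax u = `|u i 0|.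
Proof. by exists [arg max_(i > i0) `|u i 0|]%O; exact: bigmax_eq_arg. Qed.

Lemma card_vsupp_gt0 i : 0 < `|u i 0| -> (0 < #|vsupp u|)%N.
Proof. by move=> ui_gt0; apply/card_gt0P; exists i; rewrite inE -normr_eq0 gt_eqF. Qed.

End LargestEntry.

Lemma argmax_near_rank_one (R : realDomainType) n (rho eps : R)
    (u v : 'cV[R]_n) (S : 'M[R]_n) i0 j0 i1 j1 :
  0 <= rho -> (forall i j, `|(S - rho *: (u *m v^T)) i j| <= eps) ->
  `|S i1 j1| <= `|S i0 j0| ->
  rho * (`|u i1 0| * `|v j1 0|) - 2 * eps <= rho * (`|u i0 0| * `|v j0 0|).
Proof.
move=> rho_ge0 close max0.
have dev i j : `|S i j - rho * (u i 0 * v j 0)| <= eps.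
  by have := close i j; rewrite !mxE big_ord1 !mxE.
have signal i j : `|rho * (u i 0 * v j 0)| = rho * (`|u i 0| * `|v j 0|).
  by rewrite !normrM ger0_norm.
have lo := lerB_dist (rho * (u i1 0 * v j1 0)) (S i1 j1).
have hi := lerB_dist (S i0 j0) (rho * (u i0 0 * v j0 0)).
rewrite distrC signal in lo; rewrite signal in hi.
have := dev i1 j1; have := dev i0 j0; lra.
Qed.

(* Also true when [umax u = 0]: then [s1 u = 0^-1 = 0] and both sides vanish. *)
Lemma sqrt_div_s1 (R : realType) n (u v : 'cV[R]_n) g :
  0 <= g -> Num.sqrt (g / (s1 u * s1 v)) = Num.sqrt g * (umax u * umax v).
Proof.
move=> g_ge0; rewrite /s1 -invfM invrK -exprMn sqrtrM // sqrtr_sqr.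
by rewrite ger0_norm // mulr_ge0 // umax_ge0.
Qed.

(* The factor [(1 + rho)^2 >= 1] in the sample-size condition is slack here. *)
Lemma entry_noise_le_gap (R : realType) (C' c' rho a b s : R) n m :
  0 < C' -> 0 < c' -> (0 < n)%N -> (0 < m)%N ->
  0 < rho -> 0 < a -> 0 < b -> 0 <= s -> s < 1 ->
  4 * C' ^+ 2 * (2 + c') * (1 + rho) ^+ 2 / (rho ^+ 2 * (1 - s) ^+ 2)
    * (a ^+ 2)^-1 * (b ^+ 2)^-1 * ln n%:R <= m%:R ->
  2 * entry_noise C' c' n m <= rho * (a * b) * (1 - s).
Proof.
move=> C'_gt0 c'_gt0 n_gt0 m_gt0 rho_gt0 a_gt0 b_gt0 s_ge0 s_lt1 hm.
set L := ln n%:R in hm *; set M : R := m%:R in hm *.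
have L_ge0 : 0 <= L by rewrite ln_ge0 // ler1n.
have M_gt0 : 0 < M by rewrite ltr0n.
set D := rho * (a * b) * (1 - s).
have D_gt0 : 0 < D by rewrite !mulr_gt0 // subr_gt0.
set K := C' ^+ 2 * (2 + c') * L.
have K_ge0 : 0 <= K by rewrite !mulr_ge0 // ltW // addr_gt0.
have noise2 : (2 * entry_noise C' c' n m) ^+ 2 = 4 * K / M.
  rewrite /entry_noise -/L -/M !exprMn sqr_sqrtr; last first.
    by rewrite divr_ge0 ?(ltW M_gt0) // addr_ge0 // mulr_ge0 // ltW.
  rewrite /K; field; exact: lt0r_neq0.
have {}hm : 4 * K * (1 + rho) ^+ 2 <= M * D ^+ 2.
  rewrite -ler_pdivrMr ?exprn_gt0 //; apply: le_trans hm.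
  rewrite [leRHS](_ : _ = 4 * K * (1 + rho) ^+ 2 / D ^+ 2) // /K /D.
  by field; rewrite !lt0r_neq0 // subr_gt0.
have noise_ge0 : 0 <= 2 * entry_noise C' c' n m.
  by rewrite mulr_ge0 // mulr_ge0 ?sqrtr_ge0 // ltW.
rewrite -ler_sqr ?nnegrE ?(ltW D_gt0) // noise2 ler_pdivrMr //.
rewrite [_ * M]mulrC; apply: le_trans hm; apply: ler_peMr; first by rewrite mulr_ge0.
by rewrite -[1](expr1n _ 2) ler_sqr ?nnegrE; lra.
Qed.

Theorem proposition2 (R : realType) (C' c' : R) :
  0 < C' -> 0 < c' ->
  exists C : R, 0 < C /\
  forall (n m ku kv : nat) (rho : R) (u v : 'cV[R]_n)
         (x y : 'I_m -> 'cV[R]_n) (i0 j0 : 'I_n) (gamma : R),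
    (0 < m)%N ->
    0 < rho -> rho < 1 ->
    vnorm u = 1 -> vnorm v = 1 ->
    (#|vsupp u| <= ku)%N -> (#|vsupp v| <= kv)%N ->
    eventE m ku kv C' c' (Sigmahat x y - rho *: (u *m v^T)) ->
    (forall i j : 'I_n, `|Sigmahat x y i j| <= `|Sigmahat x y i0 j0|) ->
    0 < gamma -> gamma < 1 ->
    C * (1 + rho) ^+ 2 / (rho ^+ 2 * (1 - Num.sqrt gamma) ^+ 2)
      * s1 u * s1 v * ln n%:R <= m%:R ->
    Num.sqrt (gamma / (s1 u * s1 v)) <= `|u i0 0| * `|v j0 0|.
Proof.
move=> C'_gt0 c'_gt0; exists (4 * C' ^+ 2 * (2 + c')).
split; first by rewrite !mulr_gt0 ?exprn_gt0 ?addr_gt0.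
move=> n m ku kv rho u v x y i0 j0 g m_gt0 rho_gt0 _ _ _ ku_ge kv_ge E S_max g_gt0 g_lt1.
move=> sample; rewrite sqrt_div_s1; last exact: ltW.
have [i1 ui1] := umax_attained u i0; have [j1 vj1] := umax_attained v j0.
move: (umax_ge0 u); rewrite le0r => /orP[/eqP->|a_gt0].
  by rewrite mul0r mulr0 mulr_ge0.
move: (umax_ge0 v); rewrite le0r => /orP[/eqP->|b_gt0].
  by rewrite !mulr0 mulr_ge0.
have ku_gt0 : (0 < ku)%N.
  by apply: leq_trans ku_ge; apply: (card_vsupp_gt0 (i := i1)); rewrite -ui1.
have kv_gt0 : (0 < kv)%N.
  by apply: leq_trans kv_ge; apply: (card_vsupp_gt0 (i := j1)); rewrite -vj1.
have noise_entry i j := eventE_entry i j ku_gt0 kv_gt0 E.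
have := argmax_near_rank_one (ltW rho_gt0) noise_entry (S_max i1 j1).
rewrite -ui1 -vj1 => gap.
have n_gt0 : (0 < n)%N := leq_ltn_trans (leq0n i0) (ltn_ord i0).
have sg_lt1 : Num.sqrt g < 1 by rewrite -sqrtr1 ltr_sqrt.
have := entry_noise_le_gap C'_gt0 c'_gt0 n_gt0 m_gt0 rho_gt0 a_gt0 b_gt0 (sqrtr_ge0 g).
move=> /(_ sg_lt1 sample) noise.
rewrite -(ler_pM2l rho_gt0); set ab := umax u * umax v in gap noise *.
have -> : rho * (Num.sqrt g * ab) = rho * ab - rho * ab * (1 - Num.sqrt g) by ring.
lra.
Qed.
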